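(* Let $n\geq1$, $q\geq2$ and $k\geq0$ be integers. (1) For every $j\in\{0,1,\dots,n\}$, $E_{\nu_n^{*k}}(\phi_j)=\left(1-\frac{jq}{n(q-1)}\right)^k$. (2) If moreover $(n-2)(q-1)\geq 2$, then $\mathrm{Var}_{\nu_n^{*k}}(\phi_1)\leq\frac1n$.
   Context: $X_n=\{0,\dots,q-1\}^n$, $x^{(0)}=(0,\dots,0)$, $d(x,y)=\#\{i:x_i\neq y_i\}$. The simple random walk on $X_n$ has transition probability $p_n(x,x')=\frac{1}{n(q-1)}$ if $d(x,x')=1$ and $0$ otherwise; $p_n^{(k)}$ is the $k$-step transition probability ($p_n^{(0)}(x,x')=\delta_{x,x'}$) and $\nu_n^{*k}(x)=p_n^{(k)}(x^{(0)},x)$. For $j\in\{0,\dots,n\}$, $\phi_j(x)=\sum_{r=0}^{j}\frac{(-j)_r(-l)_r}{(-n)_r\,r!}\left(\frac{q}{q-1}\right)^r$ with $l=d(x^{(0)},x)$ and $(\alpha)_r=\alpha(\alpha+1)\cdots(\alpha+r-1)$, $(\alpha)_0=1$. For a probability measure $\mu$ and function $f$ on $X_n$, $E_\mu(f)=\sum_x f(x)\mu(x)$ and $\mathrm{Var}_\mu(f)=E_\mu(f^2)-E_\mu(f)^2$. *)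

From HB Require Import structures.
From mathcomp Require Import all_boot all_order all_algebra.
Set Implicit Arguments. Unset Strict Implicit. Unset Printing Implicit Defensive.
Import Order.TTheory GRing.Theory Num.Theory.
Local Open Scope ring_scope.

Definition X (n q : nat) := {ffun 'I_n -> 'I_q}.

Definition hdist (n q : nat) (x y : X n q) : nat := #|[set i | x i != y i]|.

Definition is_origin (n q : nat) (x : X n q) : bool := [forall i, val (x i) == 0%N].

Definition dist0 (n q : nat) (x : X n q) : nat := #|[set i | val (x i) != 0%N]|.

Definition trans (R : realFieldType) (n q : nat) (x y : X n q) : R :=
  if hdist x y == 1%N then 1 / (n * (q - 1))%:R else 0.

Fixpoint transk (R : realFieldType) (n q : nat) (k : nat) (x y : X n q) : R :=
  match k with
  | 0 => (x == y)%:R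
  | k'.+1 => \sum_(z : X n q) transk R k' x z * trans R z y
  end.

(* nu_n^{*k}(x) = p^(k)(x^(0), x); the origin is the unique y with is_origin y
   (for q >= 1), so the sum below has exactly one term. *)
Definition nuk (R : realFieldType) (n q k : nat) (x : X n q) : R :=
  \sum_(y : X n q | is_origin y) transk R k y x.

Definition poch (R : realFieldType) (a : R) (r : nat) : R :=
  \prod_(i < r) (a + i%:R).

Definition phi (R : realFieldType) (n q j : nat) (x : X n q) : R :=
  \sum_(r < j.+1)
    poch (- (j%:R)) r * poch (- ((dist0 x)%:R)) r
      / (poch (- (n%:R)) r * (r`!)%:R) * (q%:R / (q%:R - 1)) ^+ r.

Definition Exp (R : realFieldType) (T : finType) (mu f : T -> R) : R :=
  \sum_(x : T) f x * mu x.

Definition Var (R : realFieldType) (T : finType) (mu f : T -> R) : R :=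
  Exp mu (fun x => f x ^+ 2) - Exp mu f ^+ 2.

From HB Require Import structures.
From mathcomp Require Import all_boot all_order all_algebra.
From mathcomp Require Import ring lra zify.
Set Implicit Arguments. Unset Strict Implicit. Unset Printing Implicit Defensive.
Import Order.TTheory GRing.Theory Num.Theory.
Local Open Scope ring_scope.

(* phi_j(x) depends on x only through l = d(x^(0), x): it is the Krawtchouk
   polynomial K_j(l).  Lumping the walk onto l turns the eigenvalue equation
   P phi_j = (1 - jq/(n(q-1))) phi_j into the three-term recurrence of the
   Krawtchouk polynomials; iterating it k times and evaluating at the origin,
   where phi_j = 1, gives (1).  For (2), phi_1^2 is a linear combination of
   phi_0, phi_1 and phi_2, so (1) expresses Var(phi_1) through a = (1-t)^k and
   b = (1-2t)^k with t = q/(n(q-1)); the bound follows from b <= a^2, which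
   holds because 0 <= 1 - 2t <= (1-t)^2 when (n-2)(q-1) >= 2. *)

Lemma natr_sub1_neq0 (R : numDomainType) (m : nat) : (1 < m)%N -> (m%:R - 1 : R) != 0.
Proof. by move=> m_gt1; rewrite subr_eq0 pnatr_eq1 gtn_eqF. Qed.

Section Pochhammer.
Variable R : realFieldType.

Lemma poch0 (a : R) : poch a 0 = 1.
Proof. by rewrite /poch big_ord0. Qed.

Lemma poch_recr (a : R) r : poch a r.+1 = poch a r * (a + r%:R).
Proof. by rewrite /poch big_ord_recr. Qed.

Lemma poch_recl (a : R) r : poch a r.+1 = a * poch (a + 1) r.
Proof.
rewrite /poch big_ord_recl /= addr0; congr (_ * _).
by apply: eq_bigr => i _; rewrite /bump /= natrD addrA.
Qed.

Lemma poch_oppn_neq0 m r : (r <= m)%N -> poch (- (m%:R : R)) r != 0.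
Proof.
elim: r => [|r IHr] r_le_m; first by rewrite poch0 oner_neq0.
rewrite poch_recr mulf_neq0 ?IHr ?(ltnW r_le_m) //.
by rewrite addrC subr_eq0 eqr_nat ltn_eqF.
Qed.

(* Multiplied by [kraw_coef r], the right-hand side telescopes in [r]
   (see [kraw_coefS]). *)
Lemma poch_opp_diff (N Q J L : R) r :
  L * poch (- (L - 1)) r + (N - L) * (Q - 1) * poch (- (L + 1)) r
    + L * (Q - 2) * poch (- L) r - (N * (Q - 1) - J * Q) * poch (- L) r
  = (J - r%:R) * Q * poch (- L) r - (Q - 1) * r%:R * (N - r%:R + 1) * poch (- L) r.-1.
Proof.
case: r => [|r]; first by rewrite !poch0 /=; ring.
have shiftl : L * poch (- (L - 1)) r.+1 = - poch (- L) r.+1 * (- L + 1 + r%:R).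
  rewrite poch_recr (poch_recl (- L)) opprB addrC; ring.
have shiftr : poch (- (L + 1)) r.+1 = - (L + 1) * poch (- L) r.
  by rewrite poch_recl opprD addrNK.
rewrite shiftl shiftr poch_recr /= -natr1; ring.
Qed.

End Pochhammer.

Section Krawtchouk.
Variables (R : realFieldType) (n q j : nat).

Definition kraw_coef (r : nat) : R :=
  poch (- j%:R) r / (poch (- n%:R) r * r`!%:R) * (q%:R / (q%:R - 1)) ^+ r.

Definition krawtchouk (L : R) : R := \sum_(r < j.+1) kraw_coef r * poch (- L) r.

Lemma phi_krawtchouk (x : X n q) : @phi R n q j x = krawtchouk (dist0 x)%:R.
Proof. by apply: eq_bigr => r _; rewrite /kraw_coef; ring. Qed.

Hypothesis q_gt1 : (1 < q)%N.

Lemma kraw_coefS r : (r < n)%N ->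
  (q%:R - 1) * r.+1%:R * (n%:R - r%:R) * kraw_coef r.+1
  = (j%:R - r%:R) * q%:R * kraw_coef r.
Proof.
move=> r_lt_n.
have n_neq_r : - (n%:R : R) + r%:R != 0 by rewrite addrC subr_eq0 eqr_nat ltn_eqF.
have fact_neq0 : (r`!%:R : R) != 0 by rewrite pnatr_eq0 -lt0n fact_gt0.
rewrite /kraw_coef !poch_recr factS natrM exprS; field.
by rewrite fact_neq0 n_neq_r poch_oppn_neq0 ?natr_sub1_neq0 ?(ltnW r_lt_n) // nat1r pnatr_eq0.
Qed.

Hypothesis j_le_n : (j <= n)%N.

Lemma krawtchouk_rec (L : R) :
  L * krawtchouk (L - 1) + (n%:R - L) * (q%:R - 1) * krawtchouk (L + 1)
    + L * (q%:R - 2) * krawtchouk L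
  = (n%:R * (q%:R - 1) - j%:R * q%:R) * krawtchouk L.
Proof.
pose A r := (j%:R - r%:R) * q%:R * kraw_coef r * poch (- L) r.
pose B r := (q%:R - 1) * r%:R * (n%:R - r%:R + 1) * kraw_coef r * poch (- L) r.-1.
apply/eqP; rewrite -subr_eq0 /krawtchouk !mulr_sumr -!big_split -sumrB /=.
rewrite (eq_bigr (fun r : 'I_j.+1 => A r - B r)); last first.
  move=> r _; rewrite /A /B; apply/eqP; rewrite -subr_eq0.
  have /eqP := poch_opp_diff n%:R q%:R j%:R L r; rewrite -subr_eq0 => /eqP diff0.
  by rewrite -(mulr0 (kraw_coef r)) -diff0; apply/eqP; ring.
(* [B (r + 1) = A r] by [kraw_coefS], while [A j = B 0 = 0]. *)
rewrite sumrB big_ord_recr [X in _ - X]big_ord_recl /= /A /B subrr !mul0r.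
rewrite mulr0 !mul0r addr0 add0r subr_eq0; apply/eqP/eq_bigr => r _.
rewrite /bump /= add1n -natr1.
have r_lt_n : (r < n)%N by apply: leq_trans (ltn_ord r) j_le_n.
by rewrite -kraw_coefS //; ring.
Qed.

End Krawtchouk.

Section Walk.
Variables (R : realFieldType) (n q : nat).

Definition upd_coord (x : X n q) (i : 'I_n) (a : 'I_q) : X n q :=
  [ffun k => if k == i then a else x k].

Lemma diff_set1E (x y : X n q) i :
  (y i != x i) && (y == upd_coord x i (y i)) = ([set k | x k != y k] == [set i]).
Proof.
apply/andP/eqP => [[yi_neq /eqP y_upd]|diff_i].
  apply/setP => k; rewrite !inE y_upd ffunE.
  by case: (eqVneq k i) => [->|_]; rewrite ?eqxx // eq_sym.
have : i \in [set k | x k != y k] by rewrite diff_i set11.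
rewrite inE eq_sym => yi_neq; split=> //; apply/eqP/ffunP => k; rewrite ffunE.
case: (eqVneq k i) => [->//|k_neq_i].
have : k \notin [set k | x k != y k] by rewrite diff_i inE.
by rewrite inE negbK => /eqP/esym.
Qed.

Lemma sum_upd_coord_indicator (x y : X n q) :
  \sum_i \sum_a ((a != x i) && (y == upd_coord x i a))%:R = (hdist x y == 1)%:R :> R.
Proof.
have sum_a i : \sum_a ((a != x i) && (y == upd_coord x i a))%:R
    = ([set k | x k != y k] == [set i])%:R :> R.
  rewrite -diff_set1E (bigD1 (y i)) //= big1 ?addr0 // => a a_neq.
  case: (y =P upd_coord x i a) => [y_upd|]; last by rewrite andbF.
  by move: a_neq; rewrite y_upd ffunE !eqxx.
rewrite (eq_bigr _ (fun i _ => sum_a i)) /hdist.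
case: (boolP (#|[set k | x k != y k]| == 1)%N) => [/cards1P [i0 ->]|card_neq1].
  rewrite (bigD1 i0) //= eqxx big1 ?addr0 // => i i_neq.
  by rewrite (inj_eq set1_inj) eq_sym (negbTE i_neq).
by rewrite big1 // => i _; case: eqP => // diff_i; rewrite diff_i cards1 in card_neq1.
Qed.

Lemma trans_sumE (x : X n q) (h : X n q -> R) :
  \sum_y trans R x y * h y
  = 1 / (n * (q - 1))%:R * \sum_i \sum_(a | a != x i) h (upd_coord x i a).
Proof.
have -> : \sum_i \sum_(a | a != x i) h (upd_coord x i a)
    = \sum_y \sum_i \sum_a ((a != x i) && (y == upd_coord x i a))%:R * h y.
  rewrite exchange_big; apply: eq_bigr => i _.
  rewrite exchange_big big_mkcond; apply: eq_bigr => a _.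
  rewrite (bigD1 (upd_coord x i a)) //= eqxx andbT big1 ?addr0.
    by case: (a != x i); rewrite ?mul1r ?mul0r.
  by move=> y /negbTE ->; rewrite andbF mul0r.
rewrite mulr_sumr; apply: eq_bigr => y _.
under eq_bigr => i _ do rewrite -mulr_suml.
rewrite -mulr_suml sum_upd_coord_indicator /trans.
by case: (hdist x y == 1)%N; rewrite ?mul1r ?mulr1 ?mul0r ?mulr0.
Qed.

Lemma dist0E (x : X n q) : dist0 x = (\sum_i (val (x i) != 0%N))%N.
Proof. by rewrite /dist0 -sum1dep_card big_mkcond. Qed.

Lemma dist0_upd_coord (x : X n q) i a :
  (dist0 (upd_coord x i a) + (val (x i) != 0%N) = dist0 x + (val a != 0%N))%N.
Proof.
rewrite !dist0E (bigD1 i) //= [in RHS](bigD1 i) //= ffunE eqxx.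
rewrite (eq_bigr (fun k : 'I_n => nat_of_bool (nat_of_ord (x k) != 0%N))); first lia.
by move=> k k_neq_i; rewrite ffunE (negbTE k_neq_i).
Qed.

End Walk.

Section RadialWalk.
Variables (R : realFieldType) (n q : nat).
Hypothesis q_gt1 : (1 < q)%N.

Lemma sum_upd_coord_radial (G : R -> R) (x : X n q) i :
  let L := (dist0 x)%:R in
  \sum_(a | a != x i) G (dist0 (upd_coord x i a))%:R
  = (val (x i) != 0%N)%:R * (G (L - 1) + (q%:R - 2) * G L)
    + (val (x i) == 0%N)%:R * ((q%:R - 1) * G (L + 1)).
Proof.
move=> L; set b : R := (val (x i) != 0%N)%:R.
have dist0_updE a : (dist0 (upd_coord x i a))%:R = L - b + (val a != 0%N)%:R :> R.
  have /(congr1 (fun m => m%:R : R)) := dist0_upd_coord x i a.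
  by rewrite !natrD /L /b; lra.
pose z : 'I_q := Ordinal (ltnW q_gt1).
have -> : \sum_(a | a != x i) G (dist0 (upd_coord x i a))%:R
    = G (L - b) + (q%:R - 1) * G (L - b + 1) - G L.
  have -> : G L = G (dist0 (upd_coord x i (x i)))%:R by rewrite dist0_updE subrK.
  apply: (addIr (G (dist0 (upd_coord x i (x i)))%:R)).
  rewrite subrK addrC; transitivity (\sum_a G (dist0 (upd_coord x i a))%:R).
    by rewrite [RHS](bigD1 (x i)).
  rewrite (bigD1 z) //= dist0_updE addr0.
  rewrite (eq_bigr (fun _ => G (L - b + 1))); last first.
    move=> a a_neq_z; have a_neq0 : val a != 0%N := a_neq_z.
    by rewrite dist0_updE a_neq0.
  rewrite (eq_bigl (predC1 z)) // sumr_const cardC1 card_ord.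
  have -> : (q%:R - 1 : R) = q.-1%:R by rewrite -subn1 natrB ?(ltnW q_gt1).
  by rewrite mulr_natl.
by rewrite /b; case: (val (x i) == 0%N) => /=; rewrite ?subr0 ?subrK; ring.
Qed.

Lemma trans_sum_radial (G : R -> R) (x : X n q) :
  let L := (dist0 x)%:R in
  \sum_y trans R x y * G (dist0 y)%:R
  = 1 / (n * (q - 1))%:R *
    (L * (G (L - 1) + (q%:R - 2) * G L) + (n%:R - L) * ((q%:R - 1) * G (L + 1))).
Proof.
move=> L; rewrite trans_sumE (eq_bigr _ (fun i _ => sum_upd_coord_radial G x i)).
rewrite big_split /= -!mulr_suml.
have -> : \sum_i ((val (x i) != 0%N)%:R : R) = L by rewrite /L dist0E natr_sum.
suff -> : \sum_i ((val (x i) == 0%N)%:R : R) = n%:R - L by [].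
rewrite /L dist0E natr_sum -[n in n%:R]card_ord -sumr_const -sumrB.
by apply: eq_bigr => i _; case: eqP; rewrite ?subr0 ?subrr.
Qed.

End RadialWalk.

Section Spectrum.
Variables (R : realFieldType) (n q : nat).

Lemma trans_phi j (x : X n q) : (0 < n)%N -> (1 < q)%N -> (j <= n)%N ->
  \sum_y trans R x y * @phi R n q j y
  = (1 - (j * q)%:R / (n * (q - 1))%:R) * @phi R n q j x.
Proof.
move=> n_gt0 q_gt1 j_le_n.
under eq_bigr => y _ do rewrite phi_krawtchouk.
rewrite trans_sum_radial // phi_krawtchouk.
set L : R := (dist0 x)%:R.
have -> : L * (krawtchouk n q j (L - 1) + (q%:R - 2) * krawtchouk n q j L)
    + (n%:R - L) * ((q%:R - 1) * krawtchouk n q j (L + 1))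
    = (n%:R * (q%:R - 1) - j%:R * q%:R) * krawtchouk n q j L.
  by rewrite -krawtchouk_rec //; ring.
have n_neq0 : (n%:R : R) != 0 by rewrite pnatr_eq0 -lt0n.
rewrite !natrM natrB ?(ltnW q_gt1) //; field.
by rewrite n_neq0 natr_sub1_neq0.
Qed.

Lemma transk_eigen (f : X n q -> R) (lambda : R) :
  (forall x, \sum_y trans R x y * f y = lambda * f x) ->
  forall k x, \sum_y transk R k x y * f y = lambda ^+ k * f x.
Proof.
move=> f_eigen; elim=> [|k IHk] x /=.
  rewrite (bigD1 x) //= eqxx mul1r big1 ?addr0 ?mul1r // => y y_neq_x.
  by rewrite eq_sym (negbTE y_neq_x) mul0r.
under eq_bigr => y _ do rewrite mulr_suml.
rewrite exchange_big /=.
under eq_bigr => z _ do under eq_bigr => y _ do rewrite -mulrA.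
under eq_bigr => z _ do rewrite -mulr_sumr f_eigen mulrCA.
by rewrite -mulr_sumr IHk exprS mulrA.
Qed.

Definition origin (q_gt0 : (0 < q)%N) : X n q := [ffun _ => Ordinal q_gt0].

Lemma is_originE (q_gt0 : (0 < q)%N) (y : X n q) : is_origin y = (y == origin q_gt0).
Proof.
apply/forallP/eqP => [y0|-> i]; last by rewrite ffunE.
by apply/ffunP => i; rewrite ffunE; apply/val_inj/eqP/y0.
Qed.

Lemma Exp_nuk_eigen (q_gt0 : (0 < q)%N) k (f : X n q -> R) (lambda : R) :
  (forall x, \sum_y trans R x y * f y = lambda * f x) ->
  Exp (@nuk R n q k) f = lambda ^+ k * f (origin q_gt0).
Proof.
move=> f_eigen; rewrite /Exp /nuk -(transk_eigen f_eigen).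
under eq_bigr => x _ do rewrite mulr_sumr.
rewrite exchange_big (big_pred1 (origin q_gt0)) => [|y]; last exact: is_originE.
by apply: eq_bigr => x _; rewrite mulrC.
Qed.

Lemma phi_origin (q_gt0 : (0 < q)%N) j : @phi R n q j (origin q_gt0) = 1.
Proof.
rewrite /phi (_ : dist0 (origin q_gt0) = 0%N); last first.
  by rewrite dist0E big1 // => i _; rewrite ffunE.
rewrite big_ord_recl big1 => [|r _]; last first.
  by rewrite lift0 (poch_recl (- 0%:R)) oppr0 !(mul0r, mulr0).
by rewrite /= !poch0 expr0 !mul1r mulr1 invr1 addr0.
Qed.

End Spectrum.

Lemma eq_Exp (R : realFieldType) (T : finType) (mu f g : T -> R) :
  f =1 g -> Exp mu f = Exp mu g.
Proof. by move=> eq_fg; apply: eq_bigr => x _; rewrite eq_fg. Qed.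

Lemma ExpD (R : realFieldType) (T : finType) (mu f g : T -> R) :
  Exp mu (fun x => f x + g x) = Exp mu f + Exp mu g.
Proof. by rewrite /Exp -big_split; apply: eq_bigr => x _; rewrite mulrDl. Qed.

Lemma ExpZ (R : realFieldType) (T : finType) (mu f : T -> R) (c : R) :
  Exp mu (fun x => c * f x) = c * Exp mu f.
Proof. by rewrite /Exp mulr_sumr; apply: eq_bigr => x _; rewrite mulrA. Qed.

Lemma expr_sub2_le_sqr (R : realFieldType) (t : R) k :
  0 <= t -> 2 * t <= 1 -> (1 - 2 * t) ^+ k <= ((1 - t) ^+ k) ^+ 2.
Proof. by move=> t_ge0 t_le; rewrite exprAC lerXn2r ?nnegrE; nra. Qed.

Lemma Exp_nuk_phi (R : realFieldType) n q k j :
  (0 < n)%N -> (1 < q)%N -> (j <= n)%N ->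
  Exp (@nuk R n q k) (@phi R n q j) = (1 - (j * q)%:R / (n * (q - 1))%:R) ^+ k.
Proof.
move=> n_gt0 q_gt1 j_le_n; have q_gt0 := ltnW q_gt1.
have phi_eigen x := trans_phi R x n_gt0 q_gt1 j_le_n.
by rewrite (Exp_nuk_eigen q_gt0 k phi_eigen) phi_origin mulr1.
Qed.

Lemma phi1_sqr (R : realFieldType) n q (x : X n q) : (1 < n)%N -> (1 < q)%N ->
  @phi R n q 1 x ^+ 2
  = 1 / ((q%:R - 1) * n%:R) * @phi R n q 0 x
    + (q%:R - 2) / ((q%:R - 1) * n%:R) * @phi R n q 1 x
    + (n%:R - 1) / n%:R * @phi R n q 2 x.
Proof.
move=> n_gt1 q_gt1.
have n_neq0 : (n%:R : R) != 0 by rewrite pnatr_eq0 -lt0n ltnW.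
have n_neq1 : - (n%:R : R) + 1 != 0 by rewrite addrC subr_eq0 eq_sym pnatr_eq1 gtn_eqF.
rewrite /phi !big_ord_recr !big_ord0 /= !poch_recr !poch0 /= !factS fact0 /=.
by field; rewrite n_neq0 n_neq1 natr_sub1_neq0.
Qed.

Lemma Var_nuk_phi1_le (R : realFieldType) n q k :
  (1 < q)%N -> (2 <= (n - 2) * (q - 1))%N ->
  Var (@nuk R n q k) (@phi R n q 1) <= 1 / n%:R.
Proof.
move=> q_gt1 nq_ge2.
have n_ge3 : (3 <= n)%N by nia.
have [n_gt0 n_gt1] : (0 < n)%N /\ (1 < n)%N by split; lia.
set D : R := (n * (q - 1))%:R.
have DE : D = n%:R * (q%:R - 1) by rewrite /D natrM natrB ?(ltnW q_gt1).
have D_gt0 : 0 < D by rewrite /D ltr0n muln_gt0 n_gt0 subn_gt0.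
set t : R := q%:R / D.
have t_ge0 : 0 <= t by rewrite divr_ge0 // ltW.
have t_le : 2 * t <= 1.
  rewrite /t mulrA ler_pdivrMr // mul1r -natrM ler_nat; move: nq_ge2; rewrite mulnBl; nia.
have EphiE j : (j <= n)%N -> Exp (@nuk R n q k) (@phi R n q j) = (1 - j%:R * t) ^+ k.
  by move=> j_le_n; rewrite Exp_nuk_phi // natrM mulrA.
rewrite /Var (eq_Exp _ (fun x => phi1_sqr R x n_gt1 q_gt1)) !ExpD !ExpZ.
rewrite !EphiE ?(leq_trans _ n_ge3) // mul0r subr0 expr1n mulr1 (mul1r t).
set a := (1 - t) ^+ k; set b := (1 - 2%:R * t) ^+ k.
have a_ge0 : 0 <= a by rewrite exprn_ge0 //; lra.
have a_le1 : a <= 1 by rewrite exprn_ile1 //; lra.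
have b_le : b <= a ^+ 2 by exact: expr_sub2_le_sqr.
rewrite -subr_ge0.
have -> : 1 / n%:R - (1 / ((q%:R - 1) * n%:R) + (q%:R - 2) / ((q%:R - 1) * n%:R) * a
     + (n%:R - 1) / n%:R * b - a ^+ 2)
   = ((q%:R - 2) * (1 - a) + (q%:R - 1) * a ^+ 2 + (n%:R - 1) * (q%:R - 1) * (a ^+ 2 - b)) / D.
  by rewrite DE; field; rewrite pnatr_eq0 -lt0n n_gt0 natr_sub1_neq0.
have q_ge2 : (2 : R) <= q%:R by rewrite (ler_nat R 2).
have n_ge1 : (1 : R) <= n%:R by rewrite (ler_nat R 1).
rewrite divr_ge0 ?(ltW D_gt0) // !addr_ge0 // !mulr_ge0 ?sqr_ge0 //; lra.
Qed.

Theorem lemma4p3 (R : realFieldType) (n q k : nat) :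
  (1 <= n)%N -> (2 <= q)%N ->
  (forall j : nat, (j <= n)%N ->
     Exp (@nuk R n q k) (@phi R n q j)
     = (1 - (j * q)%:R / (n * (q - 1))%:R) ^+ k)
  /\
  ((2 <= (n - 2) * (q - 1))%N ->
     Var (@nuk R n q k) (@phi R n q 1) <= 1 / n%:R).
Proof.
move=> n_gt0 q_gt1; split=> [j|]; first exact: Exp_nuk_phi.
exact: Var_nuk_phi1_le.
Qed.
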